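(* Let $\mathbb{K}=(K,+,\times,0,1)$ be a semiring and let $A_1$ and $A_2$ be two RWTAs over the graded alphabet $\Sigma$ with weights in $K$. Then for every tree $t\in T_\Sigma$, $\mathbb{P}_{A_1\times A_2}(t)=\mathbb{P}_{A_1}(t)\times\mathbb{P}_{A_2}(t)$.
   Context: A graded alphabet is a finite set $\Sigma=\bigcup_{k\in\mathbb{N}}\Sigma_k$; $T_\Sigma$ is the set of trees $f(t_1,\ldots,t_k)$ with $f\in\Sigma_k$. A semiring $(K,+,\times,0,1)$: $(K,+)$ commutative monoid with identity $0$, $(K,\times)$ monoid with identity $1$, $0$ absorbing, $\times$ distributes over $+$. A RWTA with weights in $K$ is $A=(\Sigma,Q,\nu,\delta)$ with $Q$ finite, $\nu:Q\to K$, $\delta\subseteq\bigcup_k Q\times\Sigma_k\times Q^k$. Write $\delta(f,q_1,\ldots,q_k)=\{q\mid(q,f,q_1,\ldots,q_k)\in\delta\}$, extended to subsets by union over tuples; $\nu(S)=\sum_{s\in S}\nu(s)$ ($\nu(\emptyset)=0$); $\Delta(f(t_1,\ldots,t_k))=\delta(f,\Delta(t_1),\ldots,\Delta(t_k))$; $\mathbb{P}_A(t)=\nu(\Delta(t))$. For $A_i=(\Sigma,Q_i,\nu_i,\delta_i)$, the product $A_1\times A_2$ is the RWTA with states $Q_1\times Q_2$, transitions $\delta'(f,(q_{1_1},q_{2_1}),\ldots,(q_{1_k},q_{2_k}))=\delta_1(f,q_{1_1},\ldots,q_{1_k})\times\delta_2(f,q_{2_1},\ldots,q_{2_k})$, and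 root weights $\nu'((q_1,q_2))=\nu_1(q_1)\times\nu_2(q_2)$. *)

From HB Require Import structures.
From mathcomp Require Import all_boot all_order all_algebra.
Set Implicit Arguments. Unset Strict Implicit. Unset Printing Implicit Defensive.
Import GRing.Theory.
Local Open Scope ring_scope.

(* Graded alphabet: a finite type Sigma with an arity function ar. *)

(* Trees over Sigma; a tree is in T_Sigma iff it is well-graded (wf_tree). *)
Inductive tree (Sigma : Type) : Type :=
  Node : Sigma -> seq (tree Sigma) -> tree Sigma.
Arguments Node {Sigma}.

Fixpoint wf_tree (Sigma : Type) (ar : Sigma -> nat) (t : tree Sigma) : bool :=
  match t with
  | Node f ts => (size ts == ar f) && all (wf_tree ar) ts
  end.

(* The transition relation delta is a subset of the union over k of
   Q x Sigma_k x Q^k: delta q f s means (q, f, s) is a transition, and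
   this can only hold when the length of s is the arity of f. *)
Record rwta (Sigma : finType) (ar : Sigma -> nat) (K : pzSemiRingType)
    (Q : finType) := RWTA {
  nu : Q -> K;
  delta : Q -> Sigma -> seq Q -> bool;
  delta_ar : forall q f s, delta q f s -> size s = ar f
}.

Section Run.
Variables (Sigma : finType) (ar : Sigma -> nat) (K : pzSemiRingType) (Q : finType).
Variable A : rwta ar K Q.

Definition delta_set (f : Sigma) (Ss : seq {set Q}) : {set Q} :=
  [set q | [exists s : (size Ss).-tuple Q,
              all2 (fun x (S : {set Q}) => x \in S) s Ss && delta A q f s]].

Fixpoint Delta (t : tree Sigma) : {set Q} :=
  match t with
  | Node f ts => delta_set f (map Delta ts)
  end.

Definition nu_set (S : {set Q}) : K := \sum_(q in S) nu A q.

Definition weight (t : tree Sigma) : K := nu_set (Delta t).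
End Run.

Section Product.
Variables (Sigma : finType) (ar : Sigma -> nat) (K : pzSemiRingType)
  (Q1 Q2 : finType) (A1 : rwta ar K Q1) (A2 : rwta ar K Q2).

Definition prod_nu (q : Q1 * Q2) : K := nu A1 q.1 * nu A2 q.2.

Definition prod_delta (q : Q1 * Q2) (f : Sigma) (s : seq (Q1 * Q2)) : bool :=
  delta A1 q.1 f (map fst s) && delta A2 q.2 f (map snd s).

Lemma prod_delta_ar q f s : prod_delta q f s -> size s = ar f.
Proof. by case/andP=> /delta_ar; rewrite size_map. Qed.

Definition prod_rwta : rwta ar K (Q1 * Q2)%type :=
  RWTA prod_nu prod_delta_ar.
End Product.

(** The run of the product automaton on a tree reaches exactly the pairs of
    states reached by the two runs, [Delta (A1 x A2) t = Delta A1 t x Delta A2 t];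
    a transition of the product is a pair of transitions on the unzipped
    children tuples, so this follows by induction on [t].  The weight of a
    cartesian product of state sets then factors by distributivity. *)
From Stdlib Require List.
Import List (Forall, Forall_nil, Forall_cons).
From mathcomp Require Import all_boot all_order all_algebra.
Local Open Scope ring_scope.

Definition tree_nested_ind (Sigma : Type) (P : tree Sigma -> Prop)
    (IH : forall f ts, Forall P ts -> P (Node f ts)) : forall t, P t :=
  fix loop t := let: Node f ts := t in
    IH f ts ((fix loop_seq ts : Forall P ts :=
      if ts is t :: ts' then Forall_cons t (loop t) (loop_seq ts')
      else Forall_nil P) ts).

Lemma all2_mem_setX (T : Type) (Q1 Q2 : finType)
    (F1 : T -> {set Q1}) (F2 : T -> {set Q2}) (s : seq (Q1 * Q2)) (ts : seq T) :
  all2 (fun x (S : {set Q1 * Q2}) => x \in S) s [seq setX (F1 t) (F2 t) | t <- ts] =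
  all2 (fun x (S : {set Q1}) => x \in S) (map fst s) (map F1 ts) &&
  all2 (fun x (S : {set Q2}) => x \in S) (map snd s) (map F2 ts).
Proof.
elim: s ts => [|[a b] s IHs] [|t ts] //=.
by rewrite in_setX IHs; case: (a \in F1 t); case: (b \in F2 t); rewrite ?andbF.
Qed.

Lemma sum_setX_mul (K : pzSemiRingType) (Q1 Q2 : finType)
    (S1 : {set Q1}) (S2 : {set Q2}) (F1 : Q1 -> K) (F2 : Q2 -> K) :
  \sum_(q in setX S1 S2) F1 q.1 * F2 q.2 =
  (\sum_(q1 in S1) F1 q1) * (\sum_(q2 in S2) F2 q2).
Proof.
rewrite big_distrl /=; under [RHS]eq_bigr => q1 _ do rewrite big_distrr /=.
rewrite pair_big_dep /=.
by apply: eq_bigl => -[q1 q2]; rewrite in_setX.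
Qed.

Section Product.
Variables (Sigma : finType) (ar : Sigma -> nat) (K : pzSemiRingType).

Lemma delta_setP (Q : finType) (A : rwta ar K Q) q f (Ss : seq {set Q}) :
  reflect (exists s, all2 (fun x (S : {set Q}) => x \in S) s Ss && delta A q f s)
          (q \in delta_set A f Ss).
Proof.
rewrite inE; apply: (iffP existsP) => [[s Hs]|[s /andP[Hmem Hdelta]]].
  by exists s.
have Hsize : size s == size Ss by move: Hmem; rewrite all2E => /andP[].
by exists (Tuple Hsize); rewrite /= Hmem Hdelta.
Qed.

Variables (Q1 Q2 : finType) (A1 : rwta ar K Q1) (A2 : rwta ar K Q2).

Lemma delta_set_prod (T : Type) (F1 : T -> {set Q1}) (F2 : T -> {set Q2}) f ts :
  delta_set (prod_rwta A1 A2) f [seq setX (F1 t) (F2 t) | t <- ts] =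
  setX (delta_set A1 f (map F1 ts)) (delta_set A2 f (map F2 ts)).
Proof.
apply/setP => -[q1 q2]; rewrite in_setX.
apply/delta_setP/andP => [[s]|[/delta_setP[s1] /andP[Hmem1 Hdelta1]
                                /delta_setP[s2] /andP[Hmem2 Hdelta2]]].
  rewrite all2_mem_setX => /andP[/andP[Hmem1 Hmem2] /andP[Hdelta1 Hdelta2]].
  by split; apply/delta_setP; [exists (map fst s) | exists (map snd s)];
    apply/andP.
have size_s1 : size s1 = size ts by move: Hmem1; rewrite all2E size_map => /andP[/eqP].
have size_s2 : size s2 = size ts by move: Hmem2; rewrite all2E size_map => /andP[/eqP].
have unzip_s1 : map fst (zip s1 s2) = s1.
  by rewrite -/(unzip1 _) unzip1_zip // size_s1 size_s2.
have unzip_s2 : map snd (zip s1 s2) = s2.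
  by rewrite -/(unzip2 _) unzip2_zip // size_s1 size_s2.
exists (zip s1 s2).
by rewrite all2_mem_setX /= /prod_delta /= unzip_s1 unzip_s2 Hmem1 Hmem2 Hdelta1 Hdelta2.
Qed.

Lemma Delta_prod (t : tree Sigma) :
  Delta (prod_rwta A1 A2) t = setX (Delta A1 t) (Delta A2 t).
Proof.
elim/tree_nested_ind: t => f ts IH /=.
rewrite -delta_set_prod; congr delta_set.
by elim: ts / IH => //= t ts -> _ ->.
Qed.

Lemma nu_set_prod (S1 : {set Q1}) (S2 : {set Q2}) :
  nu_set (prod_rwta A1 A2) (setX S1 S2) = nu_set A1 S1 * nu_set A2 S2.
Proof. exact: sum_setX_mul. Qed.

End Product.

Theorem proposition3 (Sigma : finType) (ar : Sigma -> nat) (K : pzSemiRingType)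
    (Q1 Q2 : finType) (A1 : rwta ar K Q1) (A2 : rwta ar K Q2)
    (t : tree Sigma) :
  wf_tree ar t ->
  weight (prod_rwta A1 A2) t = weight A1 t * weight A2 t.
Proof. by move=> _; rewrite /weight Delta_prod nu_set_prod. Qed.
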